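(* Let $K=4m$ with $m\ge 5$ and suppose $t=KM/N=K-4$. Then the D2D coded caching rate $R=N/M-1$ is achievable with subpacketization $$F=\frac{K(K-4)\big(3K(K-4)+8\big)}{8}.$$
   Context: D2D coded caching setting: there are $N\ge 1$ files $W_1,\dots,W_N$ and $K\ge 2$ users, each with a cache of size $M$ files, $0<M\le N$, and $t:=KM/N$ is assumed to be a positive integer. A D2D coded caching scheme with (uncoded placement and) subpacketization $F\in\mathbb{N}_+$ is defined as follows. Fix a packet size $b\ge 1$; each file is a sequence of $F$ packets $W_n=(W_n^{(1)},\dots,W_n^{(F)})$, $W_n^{(j)}\in\{0,1\}^b$. Placement: each user $k\in[K]$ stores the packets $\{W_n^{(j)}:(n,j)\in Z_k\}$ for a fixed index set $Z_k\subseteq[N]\times[F]$ with $|Z_k|\le MF$ (independent of demands and file contents). Delivery: for every demand vector $\mathbf d=(d_1,\dots,d_K)\in[N]^K$, each user $k$ broadcasts to all other users $\ell_k(\mathbf d)\in\mathbb{N}$ blocks in $\{0,1\}^b$, each a deterministic function of the packets stored by user $k$; it is required that for all file contents each user $k$ can recover all $F$ packets of $W_{d_k}$ from its stored packets and the blocks sent by the other users. The rate is $R=\max_{\mathbf d}\frac{1}{F}\sum_{k=1}^K\ell_k(\mathbf d)$ (transmitted bits normalized by the file size $Fb$). The rate $R$ is achievable with subpacketization $F$ if such a scheme with rate $R$ exists for every packet size $b\ge 1$. *)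

From mathcomp Require Import all_boot all_order all_algebra.
Set Implicit Arguments. Unset Strict Implicit. Unset Printing Implicit Defensive.
Import Order.TTheory GRing.Theory Num.Theory.

Notation packet b := (b.-tuple bool).

Notation demand N K := {ffun 'I_K -> 'I_N}.

Definition cache_view (N F b : nat) (Z : {set 'I_N * 'I_F})
  (W : 'I_N -> 'I_F -> packet b) : {ffun 'I_N * 'I_F -> option (packet b)} :=
  [ffun nj => if nj \in Z then Some (W nj.1 nj.2) else None].

(* A D2D coded caching scheme (uncoded placement) with N files, K users,
   cache size M (in files), subpacketization F, packet size b. *)
Record D2D_scheme (N K F b : nat) (M : rat) := {
  placement : 'I_K -> {set 'I_N * 'I_F};
  len : 'I_K -> demand N K -> nat;
  enc : 'I_K -> demand N K ->
        {ffun 'I_N * 'I_F -> option (packet b)} -> seq (packet b);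
  dec : 'I_K -> demand N K ->
        {ffun 'I_N * 'I_F -> option (packet b)} ->
        ('I_K -> seq (packet b)) -> 'I_F -> packet b;
  cache_ok : forall k, (#|placement k|%:R <= M * F%:R)%R;
  enc_len : forall k d c, size (enc k d c) = len k d;
  dec_ok : forall (d : demand N K) (k : 'I_K) (W : 'I_N -> 'I_F -> packet b) (j : 'I_F),
    dec k d (cache_view (placement k) W)
        (fun k' => if k' == k then [::]
                   else enc k' d (cache_view (placement k') W)) j
    = W (d k) j
}.

Definition load (N K F b : nat) (M : rat) (S : D2D_scheme N K F b M)
  (d : demand N K) : rat :=
  ((\sum_(k < K) len S k d)%:R / F%:R)%R.

Definition has_rate (N K F b : nat) (M : rat) (S : D2D_scheme N K F b M) (R : rat) :=
  (forall d, (load S d <= R)%R) /\ (exists d, load S d = R).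

Definition achievable_with (N K : nat) (M R : rat) (F : nat) :=
  0 < F /\
  forall b, 1 <= b -> exists S : D2D_scheme N K F b M, has_rate S R.

(* Users form m groups of four, so K = 4m and t = K - 4.  A subfile is labelled by
   the 4-set C of users that do not store it; a transmission is labelled by a
   3-set D and a sender u outside D, and XORs one subfile labelled k |: D for each
   of the K - 4 users k outside D and u.  Every other receiver and the sender
   store that subfile, so each receiver decodes its own.  The sender u sends
   mult D u such messages for D: four if its group meets D at least twice, one if
   its group meets D once and D meets three groups.
   For this choice the number of slots offered to a member k of a 4-set C does
   not depend on k (it is a function of how C meets the groups), so the subfiles
   labelled C can be matched with the messages wanted by each member of C.
   Counting gives 4m(24(m-1)(m-2) + 48(m-1) + 4) transmissions, m - 1 times as
   many subfiles, which is the claimed F, and the load 1/(m-1) = N/M - 1. *)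

From HB Require Import structures.
From mathcomp Require Import all_boot all_order all_algebra perm.
From mathcomp Require Import zify ring.
Set Implicit Arguments. Unset Strict Implicit. Unset Printing Implicit Defensive.
Import GRing.Theory Num.Theory.

(** * XOR delivery schemes *)

Section PacketXor.

Variable b : nat.

Definition xorp (a c : packet b) : packet b := [tuple tnth a i (+) tnth c i | i < b].
Definition zerop : packet b := [tuple false | _ < b].

Lemma xorpA : associative xorp.
Proof. by move=> a c e; apply: eq_from_tnth => i; rewrite !tnth_mktuple addbA. Qed.

Lemma xorpC : commutative xorp.
Proof. by move=> a c; apply: eq_from_tnth => i; rewrite !tnth_mktuple addbC. Qed.

Lemma xor0p : left_id zerop xorp.
Proof. by move=> a; apply: eq_from_tnth => i; rewrite !tnth_mktuple. Qed.

Lemma xorpK a c : xorp (xorp a c) c = a.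
Proof. by apply: eq_from_tnth => i; rewrite !tnth_mktuple -addbA addbb addbF. Qed.

HB.instance Definition _ :=
  Monoid.isComLaw.Build (packet b) zerop xorp xorpA xorpC xor0p.

End PacketXor.

Arguments xorp {b} a c.

Section XorDelivery.

(* User [k] does not store packet [p] iff [uncached p k]; transmission [t] is sent
   by [src t] and XORs the packets [wanted t k] of its receivers [k]; user [k]
   decodes [p] from [delivery p k]. *)
Variables (N : nat) (V P T : finType).
Variables (uncached : P -> V -> bool) (src : T -> V) (receives : T -> V -> bool).
Variables (wanted : T -> V -> P) (delivery : P -> V -> T).

Hypothesis wanted_cached : forall t k k',
  receives t k -> receives t k' -> k != k' -> ~~ uncached (wanted t k') k.
Hypothesis wanted_cached_src : forall t k,
  receives t k -> ~~ uncached (wanted t k) (src t).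
Hypothesis deliveryP : forall p k,
  uncached p k -> receives (delivery p k) k /\ wanted (delivery p k) k = p.

Definition xor_placement (k : 'I_#|V|) : {set 'I_N * 'I_#|P|} :=
  [set nj | ~~ uncached (enum_val nj.2) (enum_val k)].

Definition sent_by (u : V) : seq T := enum [set t | src t == u].

Lemma card_xor_placement k :
  #|xor_placement k| = N * #|[set p | ~~ uncached p (enum_val k)]|.
Proof.
have -> : xor_placement k = setX setT (enum_rank @: [set p | ~~ uncached p (enum_val k)]).
  apply/setP => -[n j]; rewrite !inE /=; apply/idP/imsetP => [hj|[p]].
    by exists (enum_val j); rewrite ?inE ?enum_valK.
  by rewrite inE => hp ->; rewrite enum_rankK.
by rewrite cardsX cardsT card_ord card_imset //; apply: enum_rank_inj.
Qed.

Section Coding.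

Variable b : nat.
Local Notation view := {ffun 'I_N * 'I_#|P| -> option (packet b)}.

Definition read_cache (c : view) (n : 'I_N) (p : P) : packet b :=
  odflt (zerop b) (c (n, enum_rank p)).

Definition coded (d : demand N #|V|) (c : view) (t : T) : packet b :=
  \big[xorp/zerop b]_(k : V | receives t k) read_cache c (d (enum_rank k)) (wanted t k).

Definition xor_enc (k : 'I_#|V|) (d : demand N #|V|) (c : view) : seq (packet b) :=
  [seq coded d c t | t <- sent_by (enum_val k)].

Definition xor_dec (k : 'I_#|V|) (d : demand N #|V|) (c : view)
    (msgs : 'I_#|V| -> seq (packet b)) (j : 'I_#|P|) : packet b :=
  let p := enum_val j in let u := enum_val k in
  if ~~ uncached p u then read_cache c (d k) p else
  let t := delivery p u in
  xorp (nth (zerop b) (msgs (enum_rank (src t))) (index t (sent_by (src t))))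
       (\big[xorp/zerop b]_(k' : V | receives t k' && (k' != u))
          read_cache c (d (enum_rank k')) (wanted t k')).

Lemma read_cache_view k (W : 'I_N -> 'I_#|P| -> packet b) n p :
  ~~ uncached p (enum_val k) ->
  read_cache (cache_view (xor_placement k) W) n p = W n (enum_rank p).
Proof. by move=> hp; rewrite /read_cache /cache_view ffunE inE enum_rankK hp. Qed.

Lemma xor_dec_ok (d : demand N #|V|) k (W : 'I_N -> 'I_#|P| -> packet b) j :
  xor_dec k d (cache_view (xor_placement k) W)
    (fun k' => if k' == k then [::]
               else xor_enc k' d (cache_view (xor_placement k') W)) j = W (d k) j.
Proof.
rewrite /xor_dec; set p := enum_val j; set u := enum_val k.
have [hp|/negbNE hp] := boolP (~~ uncached p u).
  by rewrite read_cache_view // enum_valK.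
have [rt wt] := deliveryP hp; set t := delivery p u in rt wt *.
have src_ne : src t != u.
  by apply: contraTneq (wanted_cached_src rt) => ->; rewrite wt negbK.
have tin : t \in sent_by (src t) by rewrite mem_enum inE.
have -> : (enum_rank (src t) == k) = false.
  by apply/negbTE; apply: contra src_ne => /eqP e; rewrite /u -e enum_rankK.
rewrite /xor_enc enum_rankK (nth_map t) ?index_mem // nth_index //.
rewrite /coded (bigD1 u) //= read_cache_view ?enum_rankK ?wt; last first.
  by rewrite -wt wanted_cached_src.
rewrite (eq_bigr (fun i => W (d (enum_rank i)) (enum_rank (wanted t i)))); last first.
  by move=> i /andP [ri _]; rewrite read_cache_view ?enum_rankK ?wanted_cached_src.
rewrite [X in xorp _ X](eq_bigr (fun i => W (d (enum_rank i)) (enum_rank (wanted t i)))).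
  by rewrite xorpK /u /p !enum_valK.
by move=> i /andP [ri iu]; rewrite read_cache_view // (wanted_cached rt) // eq_sym.
Qed.

End Coding.

Lemma card_uncached_receives u :
  (forall t, receives t u -> uncached (wanted t u) u) ->
  (forall t, receives t u -> delivery (wanted t u) u = t) ->
  #|[set p | uncached p u]| = #|[set t | receives t u]|.
Proof.
move=> wanted_uncached wantedK.
rewrite -(card_in_imset (f := delivery^~ u)); last first.
  by move=> p q; rewrite !inE => /deliveryP [_ wp] /deliveryP [_ wq] e; rewrite -wp e wq.
apply: eq_card => t; rewrite inE; apply/imsetP/idP => [[p] | rt].
  by rewrite inE => /deliveryP [rp _] ->.
by exists (wanted t u); rewrite ?inE ?wantedK ?wanted_uncached.
Qed.

Lemma sum_card_sent_by : \sum_(u : V) #|[set t | src t == u]| = #|T|.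
Proof.
rewrite -sum1_card (partition_big src xpredT) //=.
by apply: eq_bigr => u _; rewrite -sum1_card; apply: eq_bigl => t; rewrite inE.
Qed.

Lemma xor_delivery_achievable (M : rat) :
  0 < N -> 0 < #|P| ->
  (forall u, ((N * #|[set p | ~~ uncached p u]|)%:R <= M * #|P|%:R)%R) ->
  achievable_with N #|V| M (#|T|%:R / #|P|%:R) #|P|.
Proof.
move=> N_gt0 P_gt0 cacheP; split=> // b _.
pose nsent (k : 'I_#|V|) (d : demand N #|V|) := #|[set t | src t == enum_val k]|.
have cacheS k : (#|xor_placement k|%:R <= M * #|P|%:R)%R.
  by rewrite card_xor_placement cacheP.
have nsent_enc k d (c : {ffun _ -> option (packet b)}) : size (xor_enc k d c) = nsent k d.
  by rewrite size_map -cardE.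
exists (Build_D2D_scheme cacheS nsent_enc (@xor_dec_ok b)).
have loadE d : load (Build_D2D_scheme cacheS nsent_enc (@xor_dec_ok b)) d
               = (#|T|%:R / #|P|%:R)%R.
  by rewrite /load /= -(big_enum_val (fun u => #|[set t | src t == u]|)) sum_card_sent_by.
by split=> [d|]; [rewrite loadE | exists [ffun=> Ordinal N_gt0]; rewrite loadE].
Qed.

End XorDelivery.

Lemma card_sumE (T : finType) (A : {pred T}) : #|A| = \sum_x (x \in A).
Proof. by rewrite -sum1_card big_mkcond; apply: eq_bigr => x _; case: (x \in A). Qed.

Lemma card_set_sum (T : finType) (P : pred T) : #|[set x | P x]| = \sum_x P x.
Proof. by rewrite card_sumE; apply: eq_bigr => x _; rewrite inE. Qed.

Lemma card_ord_lt n a : a <= n -> #|[set i : 'I_n | i < a]| = a.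
Proof.
by move=> le_an; rewrite -sum1dep_card -(big_ord_widen _ (fun=> 1) le_an) sum1_card card_ord.
Qed.

Lemma sum_pair (A B : finType) (f : A * B -> nat) :
  \sum_(v : A * B) f v = \sum_a \sum_b f (a, b).
Proof. by rewrite pair_bigA; apply: eq_bigr => -[]. Qed.

Lemma sum_by_value (T : finType) (P : pred T) (h : T -> nat) (f : nat -> nat) n :
  (forall x, P x -> h x < n) ->
  \sum_(x | P x) f (h x) = \sum_(i < n) f i * #|[set x | P x && (h x == i)]|.
Proof.
move=> h_lt.
under [RHS]eq_bigr => i _ do rewrite mulnC -sum_nat_cond_const.
rewrite (exchange_big_dep P) /=; last by move=> i x _ /andP [].
apply: eq_bigr => x Px; rewrite (big_pred1 (Ordinal (h_lt x Px))) //.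
by move=> i; rewrite Px /= -(inj_eq val_inj) eq_sym.
Qed.

Lemma sum_card_rel (A B : finType) (R : A -> B -> bool) c :
  (forall b, #|[set a | R a b]| = c) -> \sum_a #|[set b | R a b]| = c * #|B|.
Proof.
move=> cardR; under eq_bigr do rewrite card_set_sum.
rewrite exchange_big /=; under eq_bigr do rewrite -card_set_sum cardR.
by rewrite sum_nat_const mulnC.
Qed.

Lemma card_sig_set (T : finType) (P Q : pred T) :
  #|[set t : {x | P x} | Q (val t)]| = #|[set x | P x && Q x]|.
Proof.
rewrite -(card_imset _ val_inj); apply: eq_card => x; apply/imsetP/idP.
  by move=> [t]; rewrite !inE => qt ->; rewrite (valP t) qt.
by rewrite inE => /andP [px qx]; exists (Sub x px); rewrite ?inE ?SubK.
Qed.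

(** * Users in groups of four *)

Notation user m := ('I_m * 'I_4)%type.

Section Groups.

Variable m : nat.
Implicit Types (C D E S : {set user m}) (g : 'I_m) (u k v w : user m).

Definition gcard D g := #|[set i | (g, i) \in D]|.
Definition ngroups D := #|[set g | 0 < gcard D g]|.

Definition weight (c h : nat) : nat := if c == 1 then (h == 3 : nat) else if 2 <= c then 4 else 0.
(* The number of messages [u] sends for the 3-set [D]. *)
Definition mult D u := if u \in D then 0 else weight (gcard D u.1) (ngroups D).

Definition slots C k :=
  [set z : user m * 'I_4 | (z.1 \notin C) && (z.2 < mult (C :\ k) z.1)].

Definition nprofile C i := #|[set g | gcard C g == i]|.

Lemma weight_le4 c h : weight c h <= 4.
Proof. by rewrite /weight; case: ifP => _; [case: (h == 3) | case: ifP]. Qed.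

Lemma mult_le4 D u : mult D u <= 4.
Proof. by rewrite /mult; case: ifP => // _; apply: weight_le4. Qed.

Lemma mult_gt0_notin D u i : i < mult D u -> u \notin D.
Proof. by rewrite /mult; case: (u \in D). Qed.

Lemma gcard_le4 D g : gcard D g <= 4.
Proof. by apply: leq_trans (max_card _) _; rewrite card_ord. Qed.

Lemma sum_gcard D : \sum_g gcard D g = #|D|.
Proof.
by rewrite card_sumE sum_pair; apply: eq_bigr => g _; rewrite /gcard card_set_sum.
Qed.

Lemma gcardD1 C k g : k \in C -> gcard (C :\ k) g = gcard C g - (g == k.1).
Proof.
case: k => g0 i0 kC; rewrite /gcard /=; case: eqP => [->|ne].
  rewrite (cardsD1 i0 [set i | (g0, i) \in C]) inE kC add1n subn1 /=.
  by apply: eq_card => i; rewrite !inE xpair_eqE eqxx.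
by rewrite subn0; apply: eq_card => i; rewrite !inE xpair_eqE; case: eqP.
Qed.

Lemma card_slots_sum C k : k \in C ->
  #|slots C k| = \sum_g (4 - gcard C g) * weight (gcard C g - (g == k.1)) (ngroups (C :\ k)).
Proof.
move=> kC; rewrite card_set_sum !sum_pair /=.
apply: eq_bigr => g _.
rewrite (eq_bigr (fun i => ((g, i) \notin C) *
                          weight (gcard C g - (g == k.1)) (ngroups (C :\ k)))); last first.
  move=> i _; case: (boolP ((g, i) \in C)) => giC /=; first by rewrite big1.
  rewrite mul1n -card_set_sum card_ord_lt ?mult_le4 //.
  by rewrite /mult in_setD1 (negbTE giC) andbF gcardD1.
rewrite -big_distrl /= -card_set_sum; congr (_ * _).
have -> : [set i | (g, i) \notin C] = ~: [set i | (g, i) \in C] by apply/setP => i; rewrite !inE.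
by rewrite cardsCs setCK card_ord.
Qed.

Definition slot_table (a1 a2 a3 a4 : nat) : nat :=
  if a1 == 4 then 9 else if a1 == 2 then 8 else if a2 == 2 then 8 else if a3 == 1 then 4 else 0.

Definition slot_sum (n a1 a2 a3 a4 : nat) : nat :=
  let h := (1 < n) + a1 + a2 + a3 + a4 in
  (4 - n) * weight n.-1 h + 3 * weight 1 h * a1 + 2 * weight 2 h * a2 + weight 3 h * a3.

Lemma slot_sum_profile n a1 a2 a3 a4 :
  0 < n -> n + a1 + 2 * a2 + 3 * a3 + 4 * a4 = 4 ->
  slot_sum n a1 a2 a3 a4 =
  slot_table (a1 + (n == 1)) (a2 + (n == 2)) (a3 + (n == 3)) (a4 + (n == 4)).
Proof.
move=> n_gt0 size4; have small x : x <= 4 -> x \in iota 0 5 by rewrite mem_iota.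
(* Only seven profiles satisfy the constraint; all are checked by computation. *)
have check : all (fun n => all (fun a1 => all (fun a2 => all (fun a3 => all (fun a4 =>
    [&& 0 < n & n + a1 + 2 * a2 + 3 * a3 + 4 * a4 == 4] ==>
    (slot_sum n a1 a2 a3 a4 == slot_table (a1 + (n == 1)) (a2 + (n == 2))
                                          (a3 + (n == 3)) (a4 + (n == 4))))
    (iota 0 5)) (iota 0 5)) (iota 0 5)) (iota 0 5)) (iota 0 5).
  by vm_compute.
move: check => /allP/(_ n (small n ltac:(lia)))/allP/(_ a1 (small a1 ltac:(lia))).
move=> /allP/(_ a2 (small a2 ltac:(lia)))/allP/(_ a3 (small a3 ltac:(lia))).
by move=> /allP/(_ a4 (small a4 ltac:(lia))); rewrite n_gt0 size4 eqxx => /eqP.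
Qed.

Lemma card_slots C k : #|C| = 4 -> k \in C ->
  #|slots C k| = slot_table (nprofile C 1) (nprofile C 2) (nprofile C 3) (nprofile C 4).
Proof.
move=> C4 kC; set n := gcard C k.1.
pose a i := #|[set g | (g != k.1) && (gcard C g == i)]|.
have n_gt0 : 0 < n.
  by rewrite card_gt0; apply/set0Pn; exists k.2; rewrite inE -surjective_pairing.
have by_value f : \sum_(g | g != k.1) f (gcard C g) = \sum_(i < 5) f i * a i.
  by apply: sum_by_value => g _; rewrite ltnS gcard_le4.
have size4 : n + a 1 + 2 * a 2 + 3 * a 3 + 4 * a 4 = 4.
  have := sum_gcard C; rewrite C4 (bigD1 k.1) //= (by_value id) !big_ord_recr big_ord0 /=; lia.
have profileE i : nprofile C i = a i + (n == i).
  rewrite /nprofile /a !card_set_sum (bigD1 k.1) //= -/n addnC; congr (_ + _).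
  by rewrite big_mkcond /=; apply: eq_bigr => g _; case: (g != k.1).
have ngroupsE : ngroups (C :\ k) = (1 < n) + a 1 + a 2 + a 3 + a 4.
  rewrite /ngroups card_set_sum (bigD1 k.1) //= gcardD1 // eqxx subn1 -/n.
  under eq_bigr => g /negbTE gk do rewrite gcardD1 // gk subn0.
  rewrite (by_value (fun i => (0 < i : nat))) !big_ord_recr big_ord0 /=.
  by case: (n) n_gt0 => [|[|]] //; lia.
rewrite card_slots_sum // (bigD1 k.1) //= eqxx subn1 -/n.
under eq_bigr => g /negbTE gk do rewrite gk subn0.
rewrite (by_value (fun i => (4 - i) * weight i _)) !big_ord_recr big_ord0 /=.
rewrite ngroupsE !profileE -(slot_sum_profile n_gt0 size4) /slot_sum /=.
by rewrite [weight 0 _]/weight /= muln0 subnn !mul0n add0n addn0 !addnA.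
Qed.

Definition grp g : {set user m} := [set v | v.1 == g].
Definition mates u := grp u.1 :\ u.
Definition others u : {set user m} := [set v | v.1 != u.1].

Lemma card_grp g : #|grp g| = 4.
Proof.
have -> : grp g = setX [set g] setT by apply/setP => -[g' i]; rewrite !inE andbT.
by rewrite cardsX cards1 cardsT card_ord.
Qed.

Lemma card_others u : #|others u| = (m - 1) * 4.
Proof.
have -> : others u = setX [set~ u.1] setT by apply/setP => -[g i]; rewrite !inE andbT.
by rewrite cardsX cardsC1 cardsT !card_ord subn1.
Qed.

Lemma card_mates u : #|mates u| = 3.
Proof. by have := cardsD1 u (grp u.1); rewrite card_grp inE eqxx => -[/esym]. Qed.

Lemma mates_others_disjoint u : mates u :&: others u = set0.
Proof. by apply/setP => v; rewrite !inE; case: (v.1 == u.1); rewrite ?andbF. Qed.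

Lemma gcard_gt0 E v : v \in E -> 0 < gcard E v.1.
Proof. by move=> vE; apply/card_gt0P; exists v.2; rewrite inE -surjective_pairing. Qed.

Lemma ngroups_gt0 E v : v \in E -> 0 < ngroups E.
Proof. by move=> vE; apply/card_gt0P; exists v.1; rewrite inE gcard_gt0. Qed.

Lemma ngroups_le_card E : ngroups E <= #|E|.
Proof. by rewrite /ngroups card_set_sum -sum_gcard leq_sum // => g _; case: (gcard E g). Qed.

Lemma ngroups_eq1 E v : v \in E -> (ngroups E == 1) = (E \subset grp v.1).
Proof.
move=> vE; apply/cards1P/subsetP => [[g met] w wE | sub].
  have met_g x : x \in E -> x.1 = g by move=> xE; apply/set1P; rewrite -met inE gcard_gt0.
  by rewrite inE (met_g w wE) (met_g v vE).
exists v.1; apply/setP => g; rewrite !inE; apply/idP/eqP => [/card_gt0P [i]|->].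
  by rewrite inE => /sub; rewrite inE => /eqP.
exact: gcard_gt0.
Qed.

Lemma sum_subset_grp E u v : v \in E ->
  \sum_(g | g != u.1) (E \subset grp g : nat) = (v.1 != u.1) && (E \subset grp v.1).
Proof.
move=> vE; have in_grp g : E \subset grp g -> g = v.1.
  by move/subsetP/(_ v vE); rewrite inE => /eqP.
case: (boolP (v.1 != u.1)) => [vu | /negPn/eqP vu] /=.
  rewrite (bigD1 v.1) //= big1 ?addn0 // => g /andP [_ gv].
  by apply/eqP; rewrite eqb0; apply: contra gv => /in_grp ->.
by rewrite big1 // => g gu; apply/eqP; rewrite eqb0; apply: contra gu => /in_grp ->; rewrite vu.
Qed.

Definition others_pairs u h :=
  [set E : {set user m} | [&& E \subset others u, #|E| == 2 & ngroups E == h]].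

Lemma card_others_pairs1 u : #|others_pairs u 1| = (m - 1) * 6.
Proof.
transitivity (\sum_(E : {set user m})
                \sum_(g | g != u.1) ((#|E| == 2) && (E \subset grp g) : nat)).
  rewrite card_set_sum; apply: eq_bigr => E _.
  have [E2|] := boolP (#|E| == 2); last by rewrite andbF big1.
  have [v vE] : exists v, v \in E by apply/set0Pn; rewrite -card_gt0 (eqP E2).
  rewrite (sum_subset_grp u vE) (ngroups_eq1 vE) andbC.
  have [sG|] := boolP (E \subset grp v.1); rewrite ?andbF //= andbT.
  congr (nat_of_bool _); apply/subsetP/idP => [/(_ v vE)|vu w]; first by rewrite inE.
  by move/(subsetP sG); rewrite !inE => /eqP ->.
rewrite exchange_big /= (eq_bigr (fun=> 'C(4, 2))) => [|g _].
  by rewrite sum_nat_const cardC1 card_ord subn1.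
by rewrite -[in RHS](card_grp g) -cards_draws card_set_sum; apply: eq_bigr => E _; rewrite andbC.
Qed.

Lemma card_others_pairs2 u : #|others_pairs u 2| = 8 * (m - 1) * (m - 2).
Proof.
have : #|others_pairs u 2| + #|others_pairs u 1| = 'C((m - 1) * 4, 2).
  rewrite -(card_others u) -cards_draws !card_set_sum -big_split /=; apply: eq_bigr => E _.
  case: (E \subset others u) => //=; case: eqP => //= E2.
  have [v vE] : exists v, v \in E by apply/set0Pn; rewrite -card_gt0 E2.
  have := ngroups_le_card E; have := ngroups_gt0 vE; rewrite E2.
  by case: (ngroups E) => [|[|[|]]].
rewrite card_others_pairs1 bin2.
have -> : (m - 1) * 4 * ((m - 1) * 4).-1 = (8 * (m - 1) * (m - 2) + (m - 1) * 6).*2.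
  by case: m => [|[|j]] //; rewrite -mul2n; nia.
by rewrite doubleK; lia.
Qed.

Lemma card_decompositions u D :
  #|[set p : {set user m} * {set user m} |
      [&& p.1 \subset mates u, p.2 \subset others u & p.1 :|: p.2 == D]]| = (u \notin D).
Proof.
have [uD|uD] /= := boolP (u \in D).
  apply/eqP; rewrite cards_eq0; apply/eqP/setP => -[S E]; rewrite !inE /=.
  apply/and3P => -[sS sE /eqP eD]; move: uD; rewrite -eD => /setUP [/(subsetP sS)|/(subsetP sE)].
    by rewrite !inE eqxx.
  by rewrite !inE eqxx.
apply/eqP/cards1P; exists (D :&: mates u, D :&: others u); apply/setP => -[S E].
rewrite !inE /=; apply/and3P/eqP => [[sS sE /eqP <-]|[-> ->]].
  rewrite !setIUl (setIidPl sS) (setIidPl sE).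
  have -> : E :&: mates u = set0.
    by apply/eqP; rewrite -subset0 -(mates_others_disjoint u) setIC setISS.
  have -> : S :&: others u = set0.
    by apply/eqP; rewrite -subset0 -(mates_others_disjoint u) setISS.
  by rewrite setU0 set0U.
rewrite !subsetIr -setIUr; split=> //; apply/eqP/setIidPl/subsetP => v vD.
by rewrite !inE; case: eqP => [e|]; [rewrite -e vD in uD | case: (v.1 == u.1)].
Qed.

Lemma mates_grp u v : v \in mates u -> v.1 = u.1.
Proof. by rewrite !inE => /andP [_ /eqP]. Qed.

Lemma gcard_union_own u S E :
  S \subset mates u -> E \subset others u -> gcard (S :|: E) u.1 = #|S|.
Proof.
move=> sS sE; have S_u v : v \in S -> v.1 = u.1 by move/(subsetP sS)/mates_grp.
rewrite /gcard -(card_in_imset (f := snd)) => [|v w /S_u vu /S_u wu /= e]; last first.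
  by rewrite [v]surjective_pairing [w]surjective_pairing vu wu e.
apply: eq_card => i; rewrite inE; apply/idP/imsetP => [/setUP [uiS|/(subsetP sE)]|[v vS ->]].
- by exists (u.1, i).
- by rewrite inE eqxx.
- by rewrite inE -(S_u v vS) -surjective_pairing vS.
Qed.

Lemma gcard_union_other u S E g :
  S \subset mates u -> g != u.1 -> gcard (S :|: E) g = gcard E g.
Proof.
move=> sS gu; apply: eq_card => i; rewrite !inE orb_idl // => /(subsetP sS)/mates_grp /= gu'.
by rewrite gu' eqxx in gu.
Qed.

Lemma gcard_others u E : E \subset others u -> gcard E u.1 = 0.
Proof.
move=> sE; apply/eqP; rewrite cards_eq0; apply/eqP/setP => i; rewrite !inE.
by apply/negP => /(subsetP sE); rewrite inE eqxx.
Qed.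

Lemma ngroups_union u S E : S \subset mates u -> E \subset others u ->
  ngroups (S :|: E) = (0 < #|S|) + ngroups E.
Proof.
move=> sS sE; rewrite /ngroups !card_set_sum (bigD1 u.1) //= (bigD1 u.1 (P := xpredT)) //=.
rewrite gcard_union_own // gcard_others // add0n; congr (_ + _).
by apply: eq_bigr => g gu; rewrite (gcard_union_other _ sS).
Qed.

Lemma card_union_mates_others u S E : S \subset mates u -> E \subset others u ->
  #|S :|: E| = #|S| + #|E|.
Proof.
move=> sS sE; rewrite cardsU (_ : S :&: E = set0) ?cards0 ?subn0 //.
by apply/eqP; rewrite -subset0 -(mates_others_disjoint u) setISS.
Qed.

Definition weight_sum_others u c :=
  \sum_(E : {set user m} | E \subset others u) (c + #|E| == 3) * weight c ((0 < c) + ngroups E).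

Lemma sum_draws_others u c n :
  \sum_(E : {set user m} | E \subset others u) (#|E| == c) * n = 'C((m - 1) * 4, c) * n.
Proof.
rewrite -(card_others u) -cards_draws -sum_nat_cond_const big_mkcond [RHS]big_mkcond /=.
by apply: eq_bigr => E _; case: (E \subset others u); case: (#|E| == c); rewrite ?mul1n ?mul0n.
Qed.

Lemma weight_sum_othersE u :
  [/\ weight_sum_others u 0 = 0, weight_sum_others u 1 = 8 * (m - 1) * (m - 2),
      weight_sum_others u 2 = (m - 1) * 4 * 4 & weight_sum_others u 3 = 4].
Proof.
rewrite /weight_sum_others; split.
- by rewrite big1 // => E _; rewrite /weight muln0.
- rewrite -(card_others_pairs2 u) card_set_sum big_mkcond /=; apply: eq_bigr => E _.
  case: (E \subset others u) => //=; rewrite /weight /= !add1n !eqSS.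
  by case: (#|E| == 2); case: (ngroups E == 2).
- rewrite -(bin1 ((m - 1) * 4)) -(sum_draws_others u); apply: eq_bigr => E _.
  by rewrite /weight /= (_ : (2 + #|E| == 3) = (#|E| == 1)).
- transitivity ('C((m - 1) * 4, 0) * 4); last by rewrite bin0.
  rewrite -(sum_draws_others u); apply: eq_bigr => E _.
  by rewrite /weight /= -{1}[3]addn0 eqn_add2l.
Qed.

Lemma sum_mult_triples u :
  \sum_(D : {set user m}) (#|D| == 3) * mult D u = 24 * (m - 1) * (m - 2) + 48 * (m - 1) + 4.
Proof.
pose G D := (#|D| == 3) * weight (gcard D u.1) (ngroups D).
pose split (p : {set user m} * {set user m}) := (p.1 \subset mates u) && (p.2 \subset others u).
transitivity (\sum_(D : {set user m}) (u \notin D) * G D).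
  by apply: eq_bigr => D _; rewrite /mult /G; case: (u \in D); rewrite ?muln0 ?mul1n.
transitivity (\sum_(p | split p) G (p.1 :|: p.2)).
  rewrite [RHS](partition_big (fun p => p.1 :|: p.2) xpredT) //=; apply: eq_bigr => D _.
  rewrite -card_decompositions -sum_nat_cond_const.
  by apply: eq_big => [p|p /and3P [_ _ /eqP ->]] //; rewrite /split andbA.
rewrite -(pair_big (fun S => S \subset mates u) (fun E => E \subset others u)
                   (fun S E => G (S :|: E))).
rewrite (eq_bigr (fun S => weight_sum_others u #|S|)) => [|S sS]; last first.
  apply: eq_bigr => E sE.
  by rewrite /G (card_union_mates_others sS sE) (gcard_union_own sS sE) (ngroups_union sS sE).
have small S : S \subset mates u -> #|S| < 5.
  by move=> sS; rewrite ltnS (leq_trans (subset_leq_card sS)) ?card_mates.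
rewrite (sum_by_value _ small) !big_ord_recr big_ord0 /=.
have [-> -> -> ->] := weight_sum_othersE u.
have card_draws_mates c :
    #|[set S : {set user m} | (S \subset mates u) && (#|S| == c)]| = 'C(3, c).
  by rewrite cards_draws card_mates.
by rewrite !card_draws_mates (_ : 'C(3, 2) = 3) // (_ : 'C(3, 4) = 0) // bin1 binn; lia.
Qed.

End Groups.

(** * Transmissions and subfiles *)

Section Relabel.

Variables (m : nat) (s : {perm 'I_m}) (r : {perm 'I_4}).
Implicit Types (D : {set user m}) (g : 'I_m) (v : user m).

Definition relabel v : user m := (s v.1, r v.2).

Lemma relabel_inj : injective relabel.
Proof. by move=> [g i] [g' i'] [/perm_inj -> /perm_inj ->]. Qed.

Lemma mem_relabel D v : (relabel v \in relabel @: D) = (v \in D).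
Proof. exact/mem_imset/relabel_inj. Qed.

Lemma gcard_relabel D g : gcard (relabel @: D) (s g) = gcard D g.
Proof.
rewrite /gcard -(card_preimset _ (@perm_inj _ r)).
by apply: eq_card => i; rewrite !inE -[(s g, r i)]/(relabel (g, i)) mem_relabel.
Qed.

Lemma ngroups_relabel D : ngroups (relabel @: D) = ngroups D.
Proof.
rewrite /ngroups -(card_preimset _ (@perm_inj _ s)).
by apply: eq_card => g; rewrite !inE gcard_relabel.
Qed.

Lemma mult_relabel D v : mult (relabel @: D) (relabel v) = mult D v.
Proof. by rewrite /mult mem_relabel gcard_relabel ngroups_relabel. Qed.

End Relabel.

Section Transfer.

Variables (X : finType) (A B : {set X}).
Hypothesis card_AB : #|A| = #|B|.

Definition transfer (a : X) : X := nth a (enum B) (index a (enum A)).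

Lemma transfer_in a : a \in A -> transfer a \in B.
Proof. by move=> aA; rewrite -mem_enum mem_nth // -cardE -card_AB cardE index_mem mem_enum. Qed.

End Transfer.

Lemma transferK (X : finType) (A B : {set X}) a :
  #|A| = #|B| -> a \in A -> transfer B A (transfer A B a) = a.
Proof.
move=> card_AB aA; rewrite /transfer.
have lt_aB : index a (enum A) < size (enum B).
  by rewrite -cardE -card_AB cardE index_mem mem_enum.
rewrite index_uniq ?enum_uniq // (set_nth_default a) ?nth_index ?mem_enum //.
by rewrite -cardE card_AB cardE.
Qed.

Section Design.

Variable m : nat.
Implicit Types (C D : {set user m}) (k u : user m).

(* The subfiles labelled [C] are indexed by the slots of an arbitrary member. *)
Definition lead_slots C := if [pick k in C] is Some k then slots C k else set0.

Lemma card_lead_slots C k : #|C| = 4 -> k \in C -> #|lead_slots C| = #|slots C k|.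
Proof.
move=> C4 kC; rewrite /lead_slots; case: pickP => [k' k'C|C0]; last by rewrite C0 in kC.
by rewrite !card_slots.
Qed.

Definition is_transmission (x : {set user m} * user m * 'I_4) :=
  (#|x.1.1| == 3) && (x.2 < mult x.1.1 x.1.2).
Definition transmission := {x | is_transmission x}.

Definition is_subfile (x : {set user m} * (user m * 'I_4)) :=
  (#|x.1| == 4) && (x.2 \in lead_slots x.1).
Definition subfile := {x | is_subfile x}.

Definition tx_src (t : transmission) := (val t).1.2.
Definition tx_receives (t : transmission) k := (k \notin (val t).1.1) && (k != (val t).1.2).
Definition sf_uncached (p : subfile) k := k \in (val p).1.

Definition wanted_raw (t : transmission) k :=
  let C := k |: (val t).1.1 in
  (C, transfer (slots C k) (lead_slots C) ((val t).1.2, (val t).2)).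

Definition delivery_raw (p : subfile) k :=
  let C := (val p).1 in
  let z := transfer (lead_slots C) (slots C k) (val p).2 in
  (C :\ k, z.1, z.2).

Lemma card_tx_setU1 t k : tx_receives t k -> #|k |: (val t).1.1| = 4.
Proof.
case: t => -[[D u] i] tP /andP [/= kD _]; have /andP [/eqP D3 _] := tP.
by rewrite cardsU1 kD D3.
Qed.

Lemma tx_slot t k : tx_receives t k ->
  ((val t).1.2, (val t).2) \in slots (k |: (val t).1.1) k.
Proof.
case: t => -[[D u] i] tP /andP [/= kD ku]; have /andP [_ lt_i] := tP.
by rewrite inE /= in_setU1 negb_or (mult_gt0_notin lt_i) eq_sym ku setU1K.
Qed.

Lemma wanted_rawP t k : tx_receives t k -> is_subfile (wanted_raw t k).
Proof.
move=> rk; have C4 := card_tx_setU1 rk.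
rewrite /is_subfile /= C4 eqxx /=; apply: transfer_in (tx_slot rk).
by rewrite (card_lead_slots (k := k) C4) ?setU11.
Qed.

Lemma delivery_rawP p k : sf_uncached p k -> is_transmission (delivery_raw p k).
Proof.
rewrite /sf_uncached; case: p => -[C z] pP /= kC; have /andP [/eqP C4 zC] := pP.
have : transfer (lead_slots C) (slots C k) z \in slots C k.
  by apply: transfer_in => //; rewrite (card_lead_slots C4 kC).
rewrite inE => /andP [_ lt_i]; rewrite /is_transmission /= lt_i andbT.
by have := cardsD1 k C; rewrite kC C4 add1n => -[<-].
Qed.

(* Defaults for [insubd]: outside its domain [tx_wanted] and [sf_delivery] are junk. *)
Variables (p0 : subfile) (t0 : transmission).

Definition tx_wanted (t : transmission) k : subfile := insubd p0 (wanted_raw t k).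
Definition sf_delivery (p : subfile) k : transmission := insubd t0 (delivery_raw p k).

Lemma tx_wanted_val t k : tx_receives t k -> val (tx_wanted t k) = wanted_raw t k.
Proof. by move=> rk; rewrite insubdK //; apply: wanted_rawP. Qed.

Lemma sf_delivery_val p k : sf_uncached p k -> val (sf_delivery p k) = delivery_raw p k.
Proof. by move=> kC; rewrite insubdK //; apply: delivery_rawP. Qed.

Lemma tx_wanted_uncached t k : tx_receives t k -> sf_uncached (tx_wanted t k) k.
Proof. by move=> rk; rewrite /sf_uncached tx_wanted_val //= setU11. Qed.

Lemma tx_wanted_cached t k k' :
  tx_receives t k -> tx_receives t k' -> k != k' -> ~~ sf_uncached (tx_wanted t k') k.
Proof.
move=> /andP [kD _] rk' kk'.
by rewrite /sf_uncached tx_wanted_val //= in_setU1 negb_or kk'.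
Qed.

Lemma tx_wanted_cached_src t k : tx_receives t k -> ~~ sf_uncached (tx_wanted t k) (tx_src t).
Proof.
move=> rk; rewrite /sf_uncached tx_wanted_val //= in_setU1 negb_or.
case/andP: rk => _ ku; rewrite eq_sym ku /=.
by case: t {ku} => -[[D u] i] tP; have /andP [_ /mult_gt0_notin] := tP.
Qed.

Lemma sf_deliveryP p k : sf_uncached p k ->
  tx_receives (sf_delivery p k) k /\ tx_wanted (sf_delivery p k) k = p.
Proof.
move=> kC; have /andP [/eqP C4 zC] := valP p.
have C_k : #|lead_slots (val p).1| = #|slots (val p).1 k| by rewrite (card_lead_slots C4 kC).
have := transfer_in C_k zC; rewrite inE => /andP [zC' _].
have rk : tx_receives (sf_delivery p k) k.
  rewrite /tx_receives sf_delivery_val //= !inE eqxx /=.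
  by apply: contraNneq zC' => <-.
split=> //; apply: val_inj; rewrite tx_wanted_val // /wanted_raw sf_delivery_val //= setD1K //.
by rewrite -surjective_pairing transferK // [RHS]surjective_pairing.
Qed.

Lemma tx_wanted_delivery t k : tx_receives t k -> sf_delivery (tx_wanted t k) k = t.
Proof.
move=> rk; have C4 := card_tx_setU1 rk.
apply: val_inj; rewrite sf_delivery_val ?tx_wanted_uncached // /delivery_raw.
rewrite tx_wanted_val //= transferK.
- by case: t rk {C4} => -[[D u] i] tP /= /andP [kD _]; rewrite setU1K.
- by rewrite (card_lead_slots (k := k) C4) ?setU11.
- exact: tx_slot.
Qed.

End Design.

Section Counting.

Variable m : nat.
Implicit Types (D : {set user m}) (k u : user m) (t : transmission m) (p : subfile m).

Lemma card_user : #|{: user m}| = 4 * m.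
Proof. by rewrite card_prod !card_ord mulnC. Qed.

Lemma sum_lt_mult (c : bool) D u : \sum_(i < 4) (c && (i < mult D u)) = c * mult D u.
Proof.
case: c; last by rewrite big1.
by rewrite mul1n -card_set_sum card_ord_lt ?mult_le4.
Qed.

Lemma card_transmission :
  #|{: transmission m}| = 4 * m * (24 * (m - 1) * (m - 2) + 48 * (m - 1) + 4).
Proof.
transitivity (\sum_(u : user m) \sum_(D : {set user m}) (#|D| == 3) * mult D u).
  rewrite card_sig card_sumE sum_pair [LHS]sum_pair exchange_big; apply: eq_bigr => u _.
  by apply: eq_bigr => D _; rewrite -sum_lt_mult; apply: eq_bigr => i _; rewrite inE.
under eq_bigr do rewrite sum_mult_triples.
by rewrite sum_nat_const card_user.
Qed.

Definition nreceived k := #|[set t : transmission m | tx_receives t k]|.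

Lemma nreceivedE k : nreceived k =
  \sum_(D : {set user m}) \sum_(u : user m) ((#|D| == 3) && (k \notin D) && (k != u)) * mult D u.
Proof.
rewrite /nreceived /tx_receives.
rewrite (@card_sig_set _ (@is_transmission m) (fun x => (k \notin x.1.1) && (k != x.1.2))).
rewrite card_set_sum sum_pair sum_pair.
apply: eq_bigr => D _; apply: eq_bigr => u _; rewrite -sum_lt_mult.
apply: eq_bigr => i _; rewrite /is_transmission /=.
by case: (#|D| == 3); case: (k \notin D); case: (k != u); case: (i < mult D u).
Qed.

Lemma nreceived_relabel s r k : nreceived (relabel s r k) = nreceived k.
Proof.
rewrite !nreceivedE (reindex_inj (imset_inj (@relabel_inj m s r))) /=.
apply: eq_bigr => D _; rewrite (reindex_inj (@relabel_inj m s r)) /=.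
apply: eq_bigr => u _.
rewrite mult_relabel card_imset ?mem_relabel ?(inj_eq (@relabel_inj m s r)) //.
exact: relabel_inj.
Qed.

(* Group-preserving relabellings act transitively on users. *)
Lemma nreceived_const k k' : nreceived k' = nreceived k.
Proof.
have -> : k' = relabel (tperm k.1 k'.1) (tperm k.2 k'.2) k.
  by rewrite /relabel !tpermL -surjective_pairing.
exact: nreceived_relabel.
Qed.

Lemma card_receivers t : #|[set k : user m | tx_receives t k]| = 4 * m - 4.
Proof.
case: t => -[[D u] i] tP; have /andP [/eqP D3 /mult_gt0_notin uD] := tP.
have -> : [set k | tx_receives (exist _ (D, u, i) tP) k] = ~: (u |: D).
  by apply/setP => k; rewrite !inE negb_or andbC.
by rewrite cardsCs setCK cardsU1 uD D3 card_user.
Qed.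

Lemma sum_nreceived : \sum_(k : user m) nreceived k = (4 * m - 4) * #|{: transmission m}|.
Proof. exact: (@sum_card_rel _ _ (fun k t => tx_receives t k) _ card_receivers). Qed.

Lemma sum_card_uncached :
  \sum_(k : user m) #|[set p : subfile m | sf_uncached p k]| = 4 * #|{: subfile m}|.
Proof.
apply: (@sum_card_rel _ _ (fun k p => sf_uncached p k)) => p.
have /andP [/eqP C4 _] := valP p.
by apply: etrans C4; apply: eq_card => k; rewrite inE.
Qed.

Lemma transmission_gt0 : 0 < m -> 0 < #|{: transmission m}|.
Proof. by move=> m_gt0; rewrite card_transmission !muln_gt0 !addn_gt0 orbT andbT m_gt0. Qed.

Lemma subfile_gt0 : 1 < m -> 0 < #|{: subfile m}|.
Proof.
move=> m_gt1; case/card_gt0P: (transmission_gt0 (ltnW m_gt1)) => t _.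
have : 0 < #|[set k | tx_receives t k]| by rewrite card_receivers; lia.
case/card_gt0P => k; rewrite inE => rk.
by apply/card_gt0P; exists (Sub (wanted_raw t k) (wanted_rawP rk)).
Qed.

Variables (p0 : subfile m) (t0 : transmission m).

Lemma card_uncached k : #|[set p : subfile m | sf_uncached p k]| = nreceived k.
Proof.
apply: (card_uncached_receives (@sf_deliveryP m p0 t0)) => t.
  exact: tx_wanted_uncached.
exact: tx_wanted_delivery.
Qed.

Lemma card_subfile : #|{: subfile m}| = (m - 1) * #|{: transmission m}|.
Proof.
have := sum_card_uncached; under eq_bigr do rewrite card_uncached.
rewrite sum_nreceived; lia.
Qed.

Lemma card_cached k : m * #|[set p : subfile m | ~~ sf_uncached p k]| = (m - 1) * #|{: subfile m}|.
Proof.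
have := sum_nreceived; under eq_bigr do rewrite (nreceived_const k).
rewrite sum_nat_const card_user card_subfile => nreceivedE.
have -> : #|[set p | ~~ sf_uncached p k]| = #|{: subfile m}| - nreceived k.
  rewrite -card_uncached -(cardsC [set p | sf_uncached p k]) addKn.
  by apply: eq_card => p; rewrite !inE.
rewrite card_subfile; nia.
Qed.

End Counting.

(** * Arithmetic of the parameters *)

Lemma cache_fraction (m N : nat) (M : rat) : 0 < m -> 0 < N ->
  ((4 * m)%:R * M / N%:R = (4 * m - 4)%:R)%R -> (M * m%:R = (m - 1)%:R * N%:R)%R.
Proof.
move=> m_gt0 N_gt0; rewrite (_ : 4 * m - 4 = 4 * (m - 1)); last by lia.
rewrite !natrM natrB // => hM.
have N0 : (N%:R != 0 :> rat)%R by rewrite pnatr_eq0 -lt0n.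
transitivity (4%:R * m%:R * M / N%:R * N%:R / 4%:R)%R; first by field; rewrite N0.
by rewrite hM; field.
Qed.

Lemma cached_eq (m N c P : nat) (M : rat) : 0 < m ->
  (M * m%:R = (m - 1)%:R * N%:R)%R -> m * c = (m - 1) * P -> ((N * c)%:R = M * P%:R)%R.
Proof.
move=> m_gt0 hM hc; have m0 : (m%:R != 0 :> rat)%R by rewrite pnatr_eq0 -lt0n.
rewrite natrM; have -> : M = ((m - 1)%:R * N%:R / m%:R)%R by rewrite -hM mulfK.
have -> : (c%:R = (m - 1)%:R * P%:R / m%:R :> rat)%R by rewrite -natrM -hc natrM mulrC mulKf.
by field.
Qed.

Lemma rate_eq (m N T : nat) (M : rat) : 1 < m -> 0 < N -> 0 < T ->
  (M * m%:R = (m - 1)%:R * N%:R)%R -> (N%:R / M - 1 = T%:R / ((m - 1) * T)%:R)%R.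
Proof.
move=> m_gt1 N_gt0 T_gt0 hM.
have m1 : (m%:R - 1 != 0 :> rat)%R by rewrite subr_eq0 pnatr_eq1; lia.
have N0 : (N%:R != 0 :> rat)%R by rewrite pnatr_eq0 -lt0n.
have T0 : (T%:R != 0 :> rat)%R by rewrite pnatr_eq0 -lt0n.
have m0 : (m%:R != 0 :> rat)%R by rewrite pnatr_eq0 -lt0n; lia.
have -> : M = ((m - 1)%:R * N%:R / m%:R)%R by rewrite -hM mulfK.
rewrite natrM natrB ?(ltnW m_gt1) //; field.
by rewrite m1 N0 T0 m0.
Qed.

Lemma subpacketization_eq m : 1 < m ->
  4 * m * (4 * m - 4) * (3 * (4 * m) * (4 * m - 4) + 8) %/ 8 =
  (m - 1) * (4 * m * (24 * (m - 1) * (m - 2) + 48 * (m - 1) + 4)).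
Proof.
move=> m_gt1; have [j ->] : exists j, m = j + 2 by exists (m - 2); lia.
have -> : 4 * (j + 2) - 4 = 4 * (j + 1) by lia.
rewrite addnK (_ : j + 2 - 1 = j + 1); last by lia.
rewrite (_ : _ * _ * _ = 8 * ((j + 1) * (4 * (j + 2) * (24 * (j + 1) * j + 48 * (j + 1) + 4)))).
  by rewrite mulKn.
ring.
Qed.

Theorem mainTheorem8 (m N : nat) (M : rat) :
  5 <= m -> 1 <= N ->
  (0 < M)%R -> (M <= N%:R)%R ->
  ((4 * m)%:R * M / N%:R = (4 * m - 4)%:R)%R ->
  achievable_with N (4 * m) M (N%:R / M - 1)%R
    ((4 * m) * (4 * m - 4) * (3 * (4 * m) * (4 * m - 4) + 8) %/ 8).
Proof.
move=> m_ge5 N_gt0 _ _ hM.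
(* The construction only needs [1 < m]. *)
have m_gt1 : 1 < m by lia.
have fracM := cache_fraction (ltnW m_gt1) N_gt0 hM.
have P_gt0 := subfile_gt0 m_gt1.
have T_gt0 := transmission_gt0 (ltnW m_gt1).
have [p0 _] := card_gt0P P_gt0; have [t0 _] := card_gt0P T_gt0.
rewrite (rate_eq m_gt1 N_gt0 T_gt0 fracM) subpacketization_eq // -card_transmission.
rewrite -(card_subfile p0 t0) -card_user.
apply: (xor_delivery_achievable (@tx_wanted_cached m p0) (@tx_wanted_cached_src m p0)
          (@sf_deliveryP m p0 t0)) => // u.
by rewrite (cached_eq (ltnW m_gt1) fracM (card_cached p0 t0 u)).
Qed.
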